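(* Let $M\in\mathbb S^n$ with largest eigenvalue $\lambda_1>0$ and smallest eigenvalue $\lambda_n\le0$, $\beta\in\mathbb R^n$, $\gamma\in\mathbb R$, $\phi(x)=x^TMx-2\beta^Tx+\gamma$, $\mathcal Q=\{x:\phi(x)\le0\}$. Let $x_0\in\mathcal Q$, $r>0$, and let $u_n$ be a unit eigenvector of $M$ for $\lambda_n$. Denote by $B(y,r)$ the closed Euclidean ball of radius $r$ around $y$. (i) If $\lambda_n=0$ and $\beta^Tu_n>0$, then for all $\theta\ge\Theta_0:=\dfrac{r^2\lambda_1+2r\|Mx_0-\beta\|_2}{2\beta^Tu_n}$ we have $B(x_0+\theta u_n,r)\subseteq\mathcal Q$. (ii) If $\lambda_n<0$ (and $u_n$ is normalized so that $\beta^Tu_n\ge0$), let $b_0:=\lambda_nx_0^Tu_n-\beta^Tu_n+r|\lambda_n|$ and $$\Theta_-:=\frac{-b_0-\sqrt{b_0^2-\lambda_n(r^2\lambda_1+2r\|Mx_0-\beta\|_2)}}{\lambda_n}.$$ Then for all $\theta\ge\Theta_-$ we have $B(x_0+\theta u_n,r)\subseteq\mathcal Q$.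
   Context: $\mathbb S^n$ denotes the real symmetric $n\times n$ matrices. *)

From HB Require Import structures.
From mathcomp Require Import all_boot all_order all_algebra.
Set Implicit Arguments. Unset Strict Implicit. Unset Printing Implicit Defensive.
Import Order.TTheory GRing.Theory Num.Theory.
Local Open Scope ring_scope.

Definition dotv (R : rcfType) (n : nat) (x y : 'cV[R]_n) : R := (x^T *m y) 0 0.

Definition norm2 (R : rcfType) (n : nat) (x : 'cV[R]_n) : R := Num.sqrt (dotv x x).

Definition phi (R : rcfType) (n : nat) (M : 'M[R]_n) (beta : 'cV[R]_n) (gamma : R)
  (x : 'cV[R]_n) : R := dotv x (M *m x) - 2 * dotv beta x + gamma.

Definition inQ (R : rcfType) (n : nat) (M : 'M[R]_n) (beta : 'cV[R]_n) (gamma : R)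
  (x : 'cV[R]_n) : Prop := phi M beta gamma x <= 0.

Definition inBall (R : rcfType) (n : nat) (y : 'cV[R]_n) (r : R) (x : 'cV[R]_n) : Prop :=
  norm2 (x - y) <= r.

(* Write x = x0 + theta u + d with ||d|| <= r.  Expanding phi along the
   eigendirection u, bounding the cross terms by Cauchy-Schwarz and the
   quadratic term d^T M d by the Rayleigh bound lambda_1 ||d||^2, gives
   phi(x) <= phi(x0) + lambda_n theta^2 + 2 b0 theta + C with
   C = r^2 lambda_1 + 2 r ||M x0 - beta||.  The right-hand side
   is a concave quadratic in theta (linear when lambda_n = 0) which is
   nonpositive beyond its largest root, and that root is the threshold Theta.
   The Rayleigh bound is the spectral theorem for M seen as a Hermitian
   complex matrix. *)
From HB Require Import structures.
From mathcomp Require Import all_boot all_order all_algebra.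
From mathcomp Require Import ring lra complex.
Import Order.TTheory GRing.Theory Num.Theory.
Local Open Scope ring_scope.
Set Implicit Arguments. Unset Strict Implicit. Unset Printing Implicit Defensive.

Section DotProduct.
Variables (R : rcfType) (n : nat).
Implicit Types (x y z : 'cV[R]_n) (a : R).

Lemma dotvE x y : dotv x y = \sum_i x i 0 * y i 0.
Proof. by rewrite /dotv mxE; apply: eq_bigr => i _; rewrite mxE. Qed.

Lemma dotvC x y : dotv x y = dotv y x.
Proof. by rewrite !dotvE; apply: eq_bigr => i _; rewrite mulrC. Qed.

Lemma dotvDl x y z : dotv (x + y) z = dotv x z + dotv y z.
Proof. by rewrite !dotvE -big_split; apply: eq_bigr => i _; rewrite mxE mulrDl. Qed.

Lemma dotvDr x y z : dotv z (x + y) = dotv z x + dotv z y.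
Proof. by rewrite ![dotv z _]dotvC dotvDl. Qed.

Lemma dotvZl a x z : dotv (a *: x) z = a * dotv x z.
Proof. by rewrite !dotvE mulr_sumr; apply: eq_bigr => i _; rewrite mxE mulrA. Qed.

Lemma dotvZr a x z : dotv z (a *: x) = a * dotv z x.
Proof. by rewrite ![dotv z _]dotvC dotvZl. Qed.

Lemma dotvNl x z : dotv (- x) z = - dotv x z.
Proof. by rewrite -scaleN1r dotvZl mulN1r. Qed.

Lemma dotvNr x z : dotv z (- x) = - dotv z x.
Proof. by rewrite -scaleN1r dotvZr mulN1r. Qed.

Lemma dotvBl x y z : dotv (x - y) z = dotv x z - dotv y z.
Proof. by rewrite dotvDl dotvNl. Qed.

Lemma dotv0r x : dotv x 0 = 0.
Proof. by rewrite -(scale0r 0) dotvZr mul0r. Qed.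

Lemma dotv_sym_mulmx (M : 'M[R]_n) x y : M^T = M -> dotv x (M *m y) = dotv (M *m x) y.
Proof. by move=> M_sym; rewrite /dotv trmx_mul M_sym mulmxA. Qed.

Lemma dotv_ge0 x : 0 <= dotv x x.
Proof. by rewrite dotvE; apply: sumr_ge0 => i _; rewrite -expr2 sqr_ge0. Qed.

Lemma dotv_eq0 x : dotv x x = 0 -> x = 0.
Proof.
rewrite dotvE => /eqP; rewrite psumr_eq0 => [/allP x0|i _]; last by rewrite -expr2 sqr_ge0.
apply/matrixP => i j; rewrite ord1 mxE.
by have /implyP/(_ isT) := x0 i (mem_index_enum i); rewrite -expr2 sqrf_eq0 => /eqP.
Qed.

Lemma dotv_sqr_le x y : dotv x y ^+ 2 <= dotv x x * dotv y y.
Proof.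
have [/dotv_eq0 ->|yy_neq0] := eqVneq (dotv y y) 0.
  by rewrite dotv0r expr0n /= dotv0r mulr0.
have yy_gt0 : 0 < dotv y y by rewrite lt_def yy_neq0 dotv_ge0.
have := dotv_ge0 (dotv y y *: x - dotv x y *: y).
rewrite !(dotvBl, dotvNr, dotvDr, dotvZl, dotvZr) (dotvC y x) => proj_ge0.
have : 0 <= dotv y y * (dotv y y * dotv x x - dotv x y ^+ 2) by lra.
by rewrite pmulr_rge0 // subr_ge0 mulrC.
Qed.

Lemma norm2_ge0 x : 0 <= norm2 x.
Proof. exact: sqrtr_ge0. Qed.

Lemma norm2_sqr x : norm2 x ^+ 2 = dotv x x.
Proof. by rewrite sqr_sqrtr // dotv_ge0. Qed.

Lemma normr_dotv_le x y : `|dotv x y| <= norm2 x * norm2 y.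
Proof.
rewrite /norm2 -sqrtrM ?dotv_ge0 // -sqrtr_sqr.
exact: ler_wsqrtr (dotv_sqr_le x y).
Qed.

Lemma dotv_le_norm2 x y : dotv x y <= norm2 x * norm2 y.
Proof. exact: le_trans (ler_norm _) (normr_dotv_le x y). Qed.

End DotProduct.

Section HermitianBound.
Variable C : numClosedFieldType.
Local Open Scope sesquilinear_scope.

Lemma spectral_diag_eigenvalue n (A : 'M[C]_n) i :
  A \is normalmx -> eigenvalue A (spectral_diag A 0 i).
Proof.
move=> /orthomx_spectralP A_eq; have P_unit := spectral_unit A.
set P := spectralmx A in A_eq P_unit *.
apply/eigenvalueP; exists (row i P).
  rewrite [in LHS]A_eq !mulmxA -row_mul mulmxV // row1 -rowE row_diag_mx.
  by rewrite -scalemxAl -rowE.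
apply/eqP => /(congr1 (mulmx^~ (invmx P))); rewrite /= rowE -mulmxA mulmxV // mulmx1.
by rewrite mul0mx => /matrixP/(_ 0 i)/eqP; rewrite !mxE !eqxx oner_eq0.
Qed.

Lemma hermitian_form_le n (A : 'M[C]_n) (l : C) :
  A \is hermsymmx -> {in Num.real, forall mu, eigenvalue A mu -> mu <= l} ->
  forall v : 'cV[C]_n, (v ^t* *m A *m v) 0 0 <= l * (v ^t* *m v) 0 0.
Proof.
move=> A_herm A_le v.
have /orthomx_spectralP A_eq := hermitian_normalmx A_herm.
have d_real := hermitian_spectral_diag_real A_herm.
set P := spectralmx A in A_eq; set d := spectral_diag A in A_eq d_real.
have P_unitary : P \is unitarymx := spectral_unitarymx A.
set w := P *m v.
have wE : w ^t* = v ^t* *m invmx P.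
  by rewrite invmx_unitary // /w trmx_mul map_mxM.
have vv : v ^t* *m v = w ^t* *m w.
  by rewrite wE mulmxA -(mulmxA _ (invmx P)) mulVmx ?spectral_unit // mulmx1.
have vAv : v ^t* *m A *m v = w ^t* *m diag_mx d *m w by rewrite A_eq wE !mulmxA.
rewrite vv vAv mul_mx_diag !mxE mulr_sumr; apply: ler_sum => j _; rewrite !mxE.
rewrite mulrAC [leRHS]mulrC; apply: ler_wpM2l; first by rewrite mulrC mul_conjC_ge0.
by apply: A_le; [exact: (mxOverP d_real) | exact/spectral_diag_eigenvalue/hermitian_normalmx].
Qed.

End HermitianBound.

Lemma symmetric_form_le (R : rcfType) n (M : 'M[R]_n) (l : R) :
  M^T = M -> (forall mu, eigenvalue M mu -> mu <= l) ->
  forall x : 'cV[R]_n, dotv x (M *m x) <= l * dotv x x.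
Proof.
move=> M_sym M_le x; pose f := real_complex R.
have conj_f (a : R) : (f a)^* = f a by rewrite conj_Creal //; apply/complex_realP; exists a.
have fx_conj : (map_mx f x ^t* )%sesqui = (map_mx f x)^T.
  by apply/matrixP => i j; rewrite !mxE conj_f.
have fM_herm : map_mx f M \is hermsymmx.
  apply/is_hermitianmxP; rewrite expr0 scale1r; apply/matrixP => i j.
  by rewrite !mxE conj_f -{1}M_sym mxE.
have fM_le : {in Num.real, forall mu, eigenvalue (map_mx f M) mu -> mu <= f l}.
  by move=> mu /RRe_real <-; rewrite eigenvalue_map lecR; exact: M_le.
have := hermitian_form_le fM_herm fM_le (map_mx f x).
rewrite fx_conj map_trmx -!map_mxM ![map_mx f _ 0 0]mxE -rmorphM lecR.
by rewrite /dotv mulmxA.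
Qed.

Lemma affine_le0_past_root (R : realFieldType) (b c t : R) :
  0 < b -> 0 <= c -> c / (2 * b) <= t -> 0 <= t /\ c - 2 * b * t <= 0.
Proof.
move=> b_gt0 c_ge0; rewrite ler_pdivrMr ?mulr_gt0 // => t_ge.
by split; nra.
Qed.

Lemma concave_quadratic_le0_past_root (R : rcfType) (a b c t : R) :
  a < 0 -> 0 <= c -> (- b - Num.sqrt (b ^+ 2 - a * c)) / a <= t ->
  0 <= t /\ a * t ^+ 2 + 2 * b * t + c <= 0.
Proof.
move=> a_lt0 c_ge0; set s := Num.sqrt _ => t_ge.
have disc_ge0 : 0 <= b ^+ 2 - a * c by nra.
have s_ge0 : 0 <= s := sqrtr_ge0 _.
have s_sqr : s ^+ 2 = b ^+ 2 - a * c by rewrite sqr_sqrtr.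
move: t_ge; rewrite ler_ndivrMr // => t_ge.
have root_le0 : - b - s <= 0 by nra.
have t_ge0 : 0 <= t by nra.
have root_sqr : s ^+ 2 <= (a * t + b) ^+ 2 by nra.
have : 0 <= a * (a * t ^+ 2 + 2 * b * t + c) by nra.
by rewrite nmulr_rge0.
Qed.

Section QuadricAlongEigenvector.
Variables (R : rcfType) (n : nat) (M : 'M[R]_n) (beta : 'cV[R]_n) (gamma : R).
Hypothesis M_sym : M^T = M.
Local Notation phi := (phi M beta gamma).

Lemma phiDr y d : phi (y + d) = phi y + 2 * dotv (M *m y - beta) d + dotv d (M *m d).
Proof.
rewrite /phi mulmxDr !(dotvDl, dotvDr, dotvNl) (dotv_sym_mulmx y d M_sym) (dotvC d (M *m y)).
ring.
Qed.

Variables (l1 ln : R) (u : 'cV[R]_n).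
Hypotheses (l1_ge0 : 0 <= l1) (M_le : forall mu, eigenvalue M mu -> mu <= l1).
Hypotheses (Mu : M *m u = ln *: u) (u_unit : norm2 u = 1).

Lemma phi_eigenray y t :
  phi (y + t *: u) = phi y + 2 * t * (ln * dotv y u - dotv beta u) + ln * t ^+ 2.
Proof.
have uu : dotv u u = 1 by rewrite -norm2_sqr u_unit expr1n.
rewrite phiDr -scalemxAr Mu !(dotvZl, dotvZr) dotvBl -(dotv_sym_mulmx y u M_sym) Mu.
rewrite dotvZr uu; ring.
Qed.

Lemma phi_ball_eigenray_le x0 r t x : 0 <= t -> inBall (x0 + t *: u) r x ->
  phi x <= phi x0 + (ln * t ^+ 2 + 2 * t * (ln * dotv x0 u - dotv beta u + r * `|ln|)
                     + (r ^+ 2 * l1 + 2 * r * norm2 (M *m x0 - beta))).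
Proof.
rewrite /inBall => t_ge0; set d := x - _ => d_le.
have -> : x = x0 + t *: u + d by rewrite /d addrC subrK.
have d_ge0 := norm2_ge0 d.
set g := M *m x0 - beta.
have gd_le : dotv g d <= norm2 g * r.
  by apply: le_trans (dotv_le_norm2 g d) _; rewrite ler_wpM2l ?norm2_ge0.
have ud_le : ln * dotv u d <= `|ln| * r.
  apply: le_trans (ler_norm _) _; rewrite normrM ler_wpM2l //.
  by apply: le_trans (normr_dotv_le u d) _; rewrite u_unit mul1r.
have dMd_le : dotv d (M *m d) <= l1 * r ^+ 2.
  apply: le_trans (symmetric_form_le M_sym M_le d) _.
  by rewrite ler_wpM2l // -norm2_sqr; nra.
have gtu : M *m (x0 + t *: u) - beta = g + (t * ln) *: u.
  by rewrite mulmxDr -scalemxAr Mu scalerA addrAC.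
rewrite phiDr phi_eigenray gtu dotvDl dotvZl.
nra.
Qed.

End QuadricAlongEigenvector.

Theorem proposition5p3 (R : rcfType) (n : nat) (M : 'M[R]_n) (beta : 'cV[R]_n)
  (gamma l1 ln r : R) (x0 un : 'cV[R]_n) :
  M^T = M ->
  eigenvalue M l1 -> (forall mu, eigenvalue M mu -> mu <= l1) ->
  eigenvalue M ln -> (forall mu, eigenvalue M mu -> ln <= mu) ->
  0 < l1 -> ln <= 0 ->
  inQ M beta gamma x0 -> 0 < r ->
  M *m un = ln *: un -> norm2 un = 1 ->
  (* (i) *)
  (ln = 0 -> 0 < dotv beta un ->
    forall theta : R,
      (r ^+ 2 * l1 + 2 * r * norm2 (M *m x0 - beta)) / (2 * dotv beta un) <= theta ->
      forall x, inBall (x0 + theta *: un) r x -> inQ M beta gamma x)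
  /\
  (* (ii) *)
  (ln < 0 -> 0 <= dotv beta un ->
    let b0 := ln * dotv x0 un - dotv beta un + r * `|ln| in
    forall theta : R,
      (- b0 - Num.sqrt (b0 ^+ 2 - ln * (r ^+ 2 * l1 + 2 * r * norm2 (M *m x0 - beta)))) / ln
        <= theta ->
      forall x, inBall (x0 + theta *: un) r x -> inQ M beta gamma x).
Proof.
move=> M_sym _ M_le _ _ l1_gt0 _ x0_in r_gt0 Mu un_unit.
have C_ge0 : 0 <= r ^+ 2 * l1 + 2 * r * norm2 (M *m x0 - beta).
  by rewrite addr_ge0 ?mulr_ge0 ?norm2_ge0 ?ltW.
have phi_le := phi_ball_eigenray_le beta gamma M_sym (ltW l1_gt0) M_le Mu un_unit.
rewrite /inQ in x0_in; split.
- move=> ln0 bu_gt0 t t_ge x x_in; rewrite /inQ.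
  have [t_ge0 affine_le0] := affine_le0_past_root bu_gt0 C_ge0 t_ge.
  have := phi_le x0 r t x t_ge0 x_in; rewrite ln0 normr0; lra.
-
  move=> ln_lt0 _ b0 t t_ge x x_in; rewrite /inQ.
  have [t_ge0 quadratic_le0] := concave_quadratic_le0_past_root ln_lt0 C_ge0 t_ge.
  have := phi_le x0 r t x t_ge0 x_in; rewrite -/b0; lra.
Qed.
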